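(* Let $\Lambda,\Theta$ be Young functions with $\Lambda<\Theta$, and let $h\in L^1(\mathbb{R}^N)\cap L^\infty(\mathbb{R}^N)$. Then there exists $C=C(\Lambda,\Theta,\|h\|_1,\|h\|_\infty)>0$ such that $\|hu\|_\Lambda\le C\|u\|_\Theta$ for all $u\in L^\Theta(\mathbb{R}^N)$.
   Context: A Young function is a convex $\Lambda:[0,\infty)\to[0,\infty)$ with $\Lambda(t)=0$ iff $t=0$, $\lim_{t\to0^+}\Lambda(t)/t=0$ and $\lim_{t\to\infty}\Lambda(t)/t=\infty$. $\Lambda<\Theta$ means there exist $c,T>0$ with $\Lambda(t)\le\Theta(ct)$ for all $t\ge T$. $\|\cdot\|_\Lambda$ is the Luxemburg norm $\|u\|_\Lambda=\inf\{\tau>0:\int_{\mathbb{R}^N}\Lambda(|u|/\tau)\,dx\le1\}$ and $L^\Lambda(\mathbb{R}^N)$ the corresponding Orlicz space. *)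

From HB Require Import structures.
From mathcomp Require Import all_boot all_order all_algebra.
From mathcomp Require Import all_classical all_reals all_analysis.
Set Implicit Arguments. Unset Strict Implicit. Unset Printing Implicit Defensive.
Import Order.TTheory GRing.Theory Num.Theory.
Import numFieldNormedType.Exports.
Local Open Scope classical_set_scope.
Local Open Scope ring_scope.

(* R^N is modelled as N.-tuple R, with its library measurable structure
   (the product Borel sigma-algebra, generated by the coordinate maps). *)

(* mu is (the) Lebesgue measure on R^N: it gives every closed box its volume.
   Such a measure exists and, by the pi-lambda theorem, is unique on the
   product Borel sigma-algebra. *)
Definition is_lebesgue_measureN (R : realType) (N : nat)
  (mu : {measure set (N.-tuple R) -> \bar R}) : Prop :=
  forall a b : 'I_N -> R, (forall i, a i <= b i) ->
    mu [set x | forall i, a i <= tnth x i <= b i] = (\prod_(i < N) (b i - a i))%:E.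

(* Young function (only its restriction to [0, oo) is relevant). *)
Definition young (R : realType) (L : R -> R) : Prop :=
  [/\ (forall x y l : R, 0 <= x -> 0 <= y -> 0 <= l <= 1 ->
        L (l * x + (1 - l) * y) <= l * L x + (1 - l) * L y),
      (forall t : R, 0 <= t -> 0 <= L t),
      (forall t : R, 0 <= t -> (L t = 0 <-> t = 0)),
      (fun t => L t / t) @ 0^'+ --> 0
    & (fun t => L t / t) @ +oo --> +oo].

Definition young_lt (R : realType) (L T : R -> R) : Prop :=
  exists c TT : R, [/\ 0 < c, 0 < TT & forall t, TT <= t -> L t <= T (c * t)].

Definition modular (R : realType) (N : nat)
  (mu : {measure set (N.-tuple R) -> \bar R}) (L : R -> R)
  (u : N.-tuple R -> R) (tau : R) : \bar R :=
  (\int[mu]_x (L (`|u x| / tau))%:E)%E.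

(* Luxemburg norm, valued in the extended reals (+oo if the set is empty). *)
Definition luxemburg (R : realType) (N : nat)
  (mu : {measure set (N.-tuple R) -> \bar R}) (L : R -> R)
  (u : N.-tuple R -> R) : \bar R :=
  ereal_inf [set tau%:E | tau in [set tau : R | 0 < tau /\ (modular mu L u tau <= 1)%E]].

Definition orlicz (R : realType) (N : nat)
  (mu : {measure set (N.-tuple R) -> \bar R}) (L : R -> R)
  (u : N.-tuple R -> R) : Prop :=
  measurable_fun [set: N.-tuple R] u /\
  exists tau : R, 0 < tau /\ (modular mu L u tau <= 1)%E.

Definition L1_Linf (R : realType) (N : nat)
  (mu : {measure set (N.-tuple R) -> \bar R}) (h : N.-tuple R -> R) : Prop :=
  [/\ measurable_fun [set: N.-tuple R] h,
      (Lnorm mu 1 (EFin \o h) < +oo)%E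
    & (Lnorm mu +oo (EFin \o h) < +oo)%E].

From HB Require Import structures.
From mathcomp Require Import all_boot all_order all_algebra.
From mathcomp Require Import all_classical all_reals all_analysis.
From mathcomp Require Import measurable_realfun ess_sup_inf ring lra.
Import Order.TTheory GRing.Theory Num.Theory.
Import numFieldNormedType.Exports.
Local Open Scope classical_set_scope.
Local Open Scope ring_scope.
Set Implicit Arguments. Unset Strict Implicit.

(* Write c, t0 for the constants of [Λ < Θ] and D := Λ(t0)/t0.  Convexity
   gives Λ(t) <= D t on [0, t0], hence Λ(t) <= D t + Θ(c t) for all t >= 0,
   and superlinearity of Θ gives s <= S0 + Θ(s).  For |h| <= B a.e. and
   C >= D S0 ||h||_1 + (D + c) B, convexity of Θ then yields the pointwise bound
     Λ(|h| s / C) <= (D S0 / C) |h| + ((D + c) B / C) Θ(s),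
   whose integral at s = |u|/τ is at most 1 whenever ∫Θ(|u|/τ) <= 1; so Cτ is
   admissible for hu whenever τ is admissible for u.  The argument works for
   any measure. *)

Section YoungFunction.
Variables (R : realType) (L : R -> R).
Hypothesis yL : young L.

Lemma young0 : L 0 = 0.
Proof. by case: yL => _ _ L0 _ _; apply/L0. Qed.

Lemma young_ge0 (t : R) : 0 <= t -> 0 <= L t.
Proof. by case: yL => _ L_ge0 _ _ _; apply: L_ge0. Qed.

Lemma young_scale (l y : R) : 0 <= l <= 1 -> 0 <= y -> L (l * y) <= l * L y.
Proof.
move=> l01 y_ge0; case: yL => convex _ _ _ _.
by have := convex y 0 l y_ge0 (lexx 0) l01; rewrite !mulr0 !addr0 young0 mulr0 addr0.
Qed.

Lemma young_le_chord (t0 t : R) : 0 < t0 -> 0 <= t <= t0 -> L t <= L t0 / t0 * t.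
Proof.
move=> t0_gt0 /andP[t_ge0 t_le].
have t01 : 0 <= t / t0 <= 1 by rewrite divr_ge0 ?(ltW t0_gt0) //= ler_pdivrMr // mul1r.
have := young_scale t01 (ltW t0_gt0); rewrite divfK ?gt_eqF //.
by rewrite mulrAC -mulrA mulrC.
Qed.

Lemma young_le (x y : R) : 0 <= x -> x <= y -> L x <= L y.
Proof.
move=> x_ge0 xy; have [y_le0|y_gt0] := leP y 0.
  by have -> : x = y by apply/le_anti; rewrite xy (le_trans y_le0 x_ge0).
apply: le_trans (young_le_chord y_gt0 _) _; first by rewrite x_ge0.
by rewrite mulrAC ler_pdivrMr // ler_wpM2l // young_ge0 // ltW.
Qed.

Lemma young_superlinear : exists2 S0 : R, 0 <= S0 & forall s, 0 <= s -> s <= S0 + L s.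
Proof.
case: yL => _ _ _ _ /cvgryPge /(_ 1) [M [_ LM]].
exists (Num.max 1 (M + 1)); first by rewrite le_max ler01.
move=> s s_ge0; have [s_le|s_gt] := leP s (Num.max 1 (M + 1)).
  by rewrite ler_wpDr // young_ge0.
have s_gt0 : 0 < s by apply: lt_trans s_gt; rewrite lt_max ltr01.
have : 1 <= L s / s by apply: LM; apply: le_lt_trans s_gt; rewrite le_max lerDl ler01 orbT.
by rewrite ler_pdivlMr // mul1r => sL; rewrite ler_wpDl // le_max ler01.
Qed.

Lemma measurable_young d (X : measurableType d) (g : X -> R) (tau : R) :
  0 <= tau -> measurable_fun setT g -> measurable_fun setT (fun x => L (`|g x| / tau)).
Proof.
move=> tau_ge0 mg.
have -> : (fun x => L (`|g x| / tau)) = (L \o Num.max 0) \o (fun x => `|g x| * tau^-1).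
  by apply/funext => x /=; rewrite max_r // divr_ge0.
apply: measurableT_comp.
  apply: nondecreasing_measurable => // x y xy /=.
  by apply: young_le; [rewrite le_max lexx | rewrite ge_max !le_max lexx xy orbT].
apply: measurable_funM => //; exact: measurableT_comp (@normr_measurable R setT) mg.
Qed.

End YoungFunction.

Lemma ge0_integral_comb_le d (X : measurableType d) (R : realType)
    (mu : {measure set X -> \bar R}) (f g : X -> R) (k l a b : R) :
  0 <= k -> 0 <= l -> (forall x, 0 <= f x) -> (forall x, 0 <= g x) ->
  measurable_fun setT f -> measurable_fun setT g ->
  (\int[mu]_x (f x)%:E <= a%:E)%E -> (\int[mu]_x (g x)%:E <= b%:E)%E ->
  (\int[mu]_x (k * f x + l * g x)%:E <= (k * a + l * b)%:E)%E.
Proof.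
move=> k_ge0 l_ge0 f_ge0 g_ge0 m_f m_g int_f_le int_g_le.
have m_Ef : measurable_fun setT (EFin \o f) by exact/measurable_EFinP.
have m_Eg : measurable_fun setT (EFin \o g) by exact/measurable_EFinP.
have Ef_ge0 x : setT x -> (0 <= (f x)%:E)%E by rewrite lee_fin.
have Eg_ge0 x : setT x -> (0 <= (g x)%:E)%E by rewrite lee_fin.
under eq_integral do rewrite EFinD !EFinM.
rewrite ge0_integralD //; last 4 first.
- by move=> x _; rewrite mule_ge0 ?lee_fin.
- exact: emeasurable_funM (measurable_cst _) m_Ef.
- by move=> x _; rewrite mule_ge0 ?lee_fin.
- exact: emeasurable_funM (measurable_cst _) m_Eg.
rewrite !ge0_integralZl_EFin //.
by rewrite EFinD !EFinM leeD ?lee_wpmul2l ?lee_fin.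
Qed.

Lemma ae_abs_le_Lnorm_infty d (X : measurableType d) (R : realType)
    (mu : {measure set X -> \bar R}) (f : X -> R) :
  (Lnorm mu +oo (EFin \o f) < +oo)%E ->
  \forall x \ae mu, `|f x| <= fine (Lnorm mu +oo (EFin \o f)).
Proof.
move=> f_fin; have [mu_gt0|mu_le0] := ltP 0%E (mu setT).
  apply: filterS (ess_sup_ge mu (abse \o (EFin \o f))) => x /=.
  move: f_fin; rewrite Lnorm.unlock /= mu_gt0.
  by case: (ess_sup _ _) => [r| |] //= _; rewrite lee_fin.
by exists setT; split => //; apply/le_anti; rewrite mu_le0 measure_ge0.
Qed.

Section YoungDomination.
Variables (R : realType) (L T : R -> R) (c t0 S0 : R).
Hypotheses (yL : young L) (yT : young T) (c_gt0 : 0 < c) (t0_gt0 : 0 < t0).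
Hypothesis LT : forall t, t0 <= t -> L t <= T (c * t).
Hypothesis T_superlinear : forall s, 0 <= s -> s <= S0 + T s.

Let D := L t0 / t0.

Let D_ge0 : 0 <= D.
Proof. by rewrite divr_ge0 ?young_ge0 ?ltW. Qed.

Lemma young_lt_le (t : R) : 0 <= t -> L t <= D * t + T (c * t).
Proof.
move=> t_ge0; have [t_le|t_gt] := leP t t0.
  apply: le_trans (young_le_chord yL t0_gt0 _) _; first by rewrite t_ge0.
  by rewrite -/D lerDl young_ge0 // mulr_ge0 // ltW.
by apply: le_trans (LT (ltW t_gt)) _; rewrite lerDr mulr_ge0.
Qed.

Lemma young_lt_mul_le (y s B C : R) : 0 <= y <= B -> 0 <= s -> 0 < C -> c * B <= C ->
  L (y * s / C) <= D * S0 / C * y + (D + c) * B / C * T s.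
Proof.
move=> /andP[y_ge0 y_le] s_ge0 C_gt0 cB_le.
have Ts_ge0 : 0 <= T s by rewrite young_ge0.
have cyC01 : 0 <= c * y / C <= 1.
  rewrite divr_ge0 ?mulr_ge0 ?(ltW c_gt0) ?(ltW C_gt0) //= ler_pdivrMr // mul1r.
  exact: le_trans (ler_wpM2l (ltW c_gt0) y_le) cB_le.
have T_le : T (c * (y * s / C)) <= c * B / C * T s.
  have -> : c * (y * s / C) = c * y / C * s by ring.
  apply: le_trans (young_scale yT cyC01 s_ge0) _.
  apply: (ler_wpM2r Ts_ge0); apply: ler_wpM2r; first by rewrite invr_ge0 ltW.
  by rewrite ler_pM2l.
have ys_le : y * s <= y * S0 + B * T s.
  apply: le_trans (_ : y * (S0 + T s) <= _); first by rewrite ler_wpM2l ?T_superlinear.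
  by rewrite mulrDr lerD2l ler_wpM2r.
have D_le : D * (y * s / C) <= D / C * (y * S0 + B * T s).
  by rewrite mulrA mulrAC ler_wpM2l // divr_ge0 // ltW.
apply: le_trans (young_lt_le _) _; first by rewrite !divr_ge0 ?mulr_ge0 // ltW.
have -> : D * S0 / C * y + (D + c) * B / C * T s =
  D / C * (y * S0 + B * T s) + c * B / C * T s by field; rewrite gt_eqF.
exact: lerD.
Qed.

Lemma integral_young_lt_mul_le d (X : measurableType d) (mu : {measure set X -> \bar R})
    (h u : X -> R) (a B C tau : R) :
  measurable_fun setT h -> measurable_fun setT u ->
  (\int[mu]_x (`|h x|)%:E <= a%:E)%E -> (\forall x \ae mu, `|h x| <= B) -> 0 <= B ->
  0 < C -> D * S0 * a + (D + c) * B <= C -> 0 < tau ->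
  (\int[mu]_x (T (`|u x| / tau))%:E <= 1)%E ->
  (\int[mu]_x (L (`|h x * u x| / (C * tau)))%:E <= 1)%E.
Proof.
move=> m_h m_u int_h_le h_le B_ge0 C_gt0 C_ge tau_gt0 int_T_le.
have S0_ge0 : 0 <= S0 by rewrite -[S0]addr0 -[X in _ + X](young0 yT) T_superlinear.
have a_ge0 : 0 <= a by rewrite -lee_fin (le_trans _ int_h_le) // integral_ge0.
set al := D * S0 / C; set be := (D + c) * B / C.
have al_ge0 : 0 <= al by exact: divr_ge0 (mulr_ge0 D_ge0 S0_ge0) (ltW C_gt0).
have be_ge0 : 0 <= be.
  exact: divr_ge0 (mulr_ge0 (addr_ge0 D_ge0 (ltW c_gt0)) B_ge0) (ltW C_gt0).
have m_abs_h : measurable_fun setT (fun x => `|h x|).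
  exact: measurableT_comp (@normr_measurable R setT) m_h.
have m_Tu := measurable_young yT (ltW tau_gt0) m_u.
have Tu_ge0 x : 0 <= T (`|u x| / tau) by rewrite young_ge0 // divr_ge0 // ltW.
have pointwise_le : \forall x \ae mu, setT x ->
    ((L (`|h x * u x| / (C * tau)))%:E <= (al * `|h x| + be * T (`|u x| / tau))%:E)%E.
  apply: filterS h_le => x hx _; rewrite lee_fin.
  have -> : `|h x * u x| / (C * tau) = `|h x| * (`|u x| / tau) / C.
    by rewrite normrM; field; rewrite !gt_eqF.
  apply: young_lt_mul_le => //; first by rewrite normr_ge0.
    by rewrite divr_ge0 // ltW.
  apply: le_trans C_ge; apply: ler_wpDl; first exact: mulr_ge0 (mulr_ge0 D_ge0 S0_ge0) a_ge0.
  by rewrite ler_wpM2r // lerDr.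
apply: le_trans (ae_ge0_le_integral _ _ _ _ _ pointwise_le) _ => //.
- by move=> x _; rewrite lee_fin young_ge0 // divr_ge0 // ltW // mulr_gt0.
- apply/measurable_EFinP/(measurable_young yL (ltW (mulr_gt0 C_gt0 tau_gt0))).
  exact: measurable_funM.
- by move=> x _; rewrite lee_fin addr_ge0 // mulr_ge0.
- by apply/measurable_EFinP; apply: measurable_funD; apply: measurable_funM.
apply: le_trans (ge0_integral_comb_le al_ge0 be_ge0 (fun x => normr_ge0 (h x)) Tu_ge0
  m_abs_h m_Tu int_h_le int_T_le) _.
by rewrite mulr1 lee_fin /al /be mulrAC -mulrDl ler_pdivrMr // mul1r.
Qed.

End YoungDomination.

Lemma luxemburg_le_scale (R : realType) (N : nat) (mu : {measure set (N.-tuple R) -> \bar R})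
    (L T : R -> R) (u v : N.-tuple R -> R) (C : R) : 0 < C ->
  (forall tau, 0 < tau -> (modular mu T u tau <= 1)%E -> (modular mu L v (C * tau) <= 1)%E) ->
  (luxemburg mu L v <= C%:E * luxemburg mu T u)%E.
Proof.
move=> C_gt0 admissible; rewrite /luxemburg -lee_pdivrMl //.
apply/ereal_infP => _ [tau [tau_gt0 mod_le] <-].
rewrite lee_pdivrMl // -EFinM; apply: ereal_inf_lbound.
by exists (C * tau) => //; split; [exact: mulr_gt0 | exact: admissible].
Qed.

Theorem proposition2p15 (R : realType) (N : nat)
  (mu : {measure set (N.-tuple R) -> \bar R}) (L T : R -> R) :
  is_lebesgue_measureN mu -> young L -> young T -> young_lt L T ->
  exists C : R -> R -> R,
    forall h : N.-tuple R -> R, L1_Linf mu h ->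
      let C0 := C (fine (Lnorm mu 1 (EFin \o h))) (fine (Lnorm mu +oo (EFin \o h))) in
      0 < C0 /\
      forall u : N.-tuple R -> R, orlicz mu T u ->
        (luxemburg mu L (fun x => (h x * u x)%R) <= C0%:E * luxemburg mu T u)%E.
Proof.
move=> _ yL yT [c [t0 [c_gt0 t0_gt0 LT]]].
have [S0 S0_ge0 T_superlinear] := young_superlinear yT.
pose D := L t0 / t0.
have D_ge0 : 0 <= D by rewrite divr_ge0 ?young_ge0 // ltW.
exists (fun a b => D * S0 * `|a| + (D + c) * `|b| + 1).
move=> h [m_h h1_fin hinf_fin] C0.
set a := fine (Lnorm mu 1 (EFin \o h)) in C0 *.
set b := fine (Lnorm mu +oo (EFin \o h)) in C0 *.
have a_term := mulr_ge0 (mulr_ge0 D_ge0 S0_ge0) (normr_ge0 a).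
have b_term := mulr_ge0 (addr_ge0 D_ge0 (ltW c_gt0)) (normr_ge0 b).
have C0_gt0 : 0 < C0 by rewrite /C0; lra.
have int_h_le : (\int[mu]_x `|h x|%:E <= `|a|%:E)%E.
  have -> : (\int[mu]_x `|h x|%:E = Lnorm mu 1 (EFin \o h))%E.
    by rewrite Lnorm1; apply: eq_integral => x _; rewrite abse_EFin.
  by rewrite -[X in (X <= _)%E]fineK ?ge0_fin_numE ?Lnorm_ge0 // lee_fin ler_norm.
have h_le : \forall x \ae mu, `|h x| <= `|b|.
  by apply: filterS (ae_abs_le_Lnorm_infty hinf_fin) => x /le_trans; apply; exact: ler_norm.
have C0_ge : D * S0 * `|a| + (D + c) * `|b| <= C0 by rewrite /C0 lerDl.
split=> // u [m_u _]; apply: luxemburg_le_scale => // tau tau_gt0.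
exact: (integral_young_lt_mul_le yL yT c_gt0 t0_gt0 LT T_superlinear m_h m_u int_h_le h_le
  (normr_ge0 b) C0_gt0 C0_ge tau_gt0).
Qed.
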